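(* For every $k\ge1$ and $l\in\{1,\dots,k+1\}$, the maps $\widetilde{i(\alpha)}:\mathrm{gr}_{k,l}\to\mathrm{gr}_{k-1,l-1}$, $[u]\mapsto[i(\alpha)u]$, and $\widetilde X:\mathrm{gr}_{k-1,l-1}\to\mathrm{gr}_{k,l}$, $[u]\mapsto[Xu]$, are well defined and satisfy \[\widetilde X\circ\widetilde{i(\alpha)}\big|_{\mathrm{gr}_{k,l}}=r(l-1,k-l+1)\,\mathrm{Id},\qquad \widetilde{i(\alpha)}\circ\widetilde X\big|_{\mathrm{gr}_{k-1,l-1}}=r(l-1,k-l+1)\,\mathrm{Id}.\] In particular, if $r(l-1,k-l+1)\neq0$, then $\widetilde{i(\alpha)}:\mathrm{gr}_{k,l}\to\mathrm{gr}_{k-1,l-1}$ is invertible with inverse $\frac{1}{r(l-1,k-l+1)}\widetilde X$.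
   Context: Let $n\ge1$, $M=\mathbb{R}^{2n+1}$ with coordinates $(q^1,\dots,q^n,p^1,\dots,p^n,t)$. For $\mu\in\mathbb{R}$, $\mathcal{S}^k_\mu$ denotes the space of smooth functions $S(x,\xi)$ on $M\times\mathbb{R}^{2n+1}$ homogeneous polynomial of degree $k$ in $\xi=(\xi_{q^1},\dots,\xi_{q^n},\xi_{p^1},\dots,\xi_{p^n},\xi_t)$. Fix $\delta\in\mathbb{R}$ and set $R^k=\mathcal{S}^k_{\delta+\frac{k}{n+1}}$ for $k\ge0$, $R^{j}=0$ for $j<0$. Let $E_s=\sum_i(p^i\partial_{p^i}+q^i\partial_{q^i})$, $\langle E_s,\xi\rangle=\sum_i(p^i\xi_{p^i}+q^i\xi_{q^i})$, $D(S)=\sum_i(\xi_{q^i}\partial_{p^i}S-\xi_{p^i}\partial_{q^i}S)+\xi_tE_s(S)-\langle E_s,\xi\rangle\partial_tS$. Operators: $i(\alpha):R^k\to R^{k-1}$, $i(\alpha)(S)=\frac12\big(\sum_i(p^i\partial_{\xi_{q^i}}S-q^i\partial_{\xi_{p^i}}S)-\partial_{\xi_t}S\big)$; $X:R^k\to R^{k+1}$, $X(S)=D(S)+(2(n+1)\delta+k)\xi_tS$. Set $r(l,k)=-\frac{l}{2}\big(2(n+1)\delta+2k+l-1\big)$. For $k\ge0,l\ge0$, $\mathcal{F}_{k,l}=R^k\cap\ker\big(i(\alpha)^l\big)$; for $l\ge1$, $\mathrm{gr}_{k,l}=\mathcal{F}_{k,l}/\mathcal{F}_{k,l-1}$, and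 $\mathrm{gr}_{k,0}=\{0\}$. *)

From HB Require Import structures.
From mathcomp Require Import all_boot all_order all_algebra.
From mathcomp Require Import all_classical all_reals all_analysis.
Set Implicit Arguments. Unset Strict Implicit. Unset Printing Implicit Defensive.
Import Order.TTheory GRing.Theory Num.Theory.
Import numFieldNormedType.Exports.
Local Open Scope ring_scope.

(* Coordinates on M = R^(2n+1): index q^i = i, p^i = n + i, t = 2n,
   as elements of 'I_(n + n + 1).  The same indexing is used for xi. *)
Definition qI (n : nat) (i : 'I_n) : 'I_(n + n + 1) := lshift 1 (lshift n i).
Definition pI (n : nat) (i : 'I_n) : 'I_(n + n + 1) := lshift 1 (rshift n i).
Definition tI (n : nat) : 'I_(n + n + 1) := rshift (n + n) (ord0 : 'I_1).

Section Defs.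
Variable R : realType.
Variable n : nat.
Local Notation N := (n + n + 1)%N.
Local Notation pt := 'rV[R]_N.

Definition symbol := pt -> pt -> R.

Definition crd (x : pt) (j : 'I_N) : R := x ord0 j.

Definition iterD (m : nat) (s : seq 'I_m) (f : 'rV[R]_m -> R) : 'rV[R]_m -> R :=
  foldr (fun j g => fun x => derive g x (delta_mx 0 j)) f s.

Definition smooth (m : nat) (f : 'rV[R]_m -> R) : Prop :=
  forall (s : seq 'I_m) (x : 'rV[R]_m),
    {for x, continuous (iterD s f)} /\
    forall j : 'I_m, derivable (iterD s f) x (delta_mx 0 j).

Definition joint (S : symbol) : 'rV[R]_(N + N) -> R :=
  fun z => S (lsubmx z) (rsubmx z).

Definition homog_poly (k : nat) (S : symbol) : Prop :=
  exists c : k.-tuple 'I_N -> pt -> R,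
    forall x xi, S x xi = \sum_(s : k.-tuple 'I_N) c s x * \prod_(j <- s) crd xi j.

(* R^k = S^k_{delta + k/(n+1)} as a space of functions *)
Definition Rk (k : nat) (S : symbol) : Prop := smooth (joint S) /\ homog_poly k S.

Definition dx (j : 'I_N) (S : symbol) : symbol :=
  fun x xi => derive (fun y => S y xi) x (delta_mx 0 j).
Definition dxi (j : 'I_N) (S : symbol) : symbol :=
  fun x xi => derive (S x) xi (delta_mx 0 j).

Definition Es (S : symbol) : symbol := fun x xi =>
  \sum_(i < n) (crd x (pI i) * dx (pI i) S x xi + crd x (qI i) * dx (qI i) S x xi).

Definition Esxi (x xi : pt) : R :=
  \sum_(i < n) (crd x (pI i) * crd xi (pI i) + crd x (qI i) * crd xi (qI i)).

Definition Dop (S : symbol) : symbol := fun x xi =>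
  \sum_(i < n) (crd xi (qI i) * dx (pI i) S x xi - crd xi (pI i) * dx (qI i) S x xi)
  + crd xi (tI n) * Es S x xi - Esxi x xi * dx (tI n) S x xi.

Definition ialpha (S : symbol) : symbol := fun x xi =>
  2^-1 * (\sum_(i < n) (crd x (pI i) * dxi (qI i) S x xi
                          - crd x (qI i) * dxi (pI i) S x xi)
          - dxi (tI n) S x xi).

Definition Xop (delta : R) (k : nat) (S : symbol) : symbol := fun x xi =>
  Dop S x xi + (2 * (n + 1)%:R * delta + k%:R) * crd xi (tI n) * S x xi.

Definition rr (delta : R) (l k : nat) : R :=
  - (l%:R / 2) * (2 * (n + 1)%:R * delta + 2 * k%:R + l%:R - 1).

Definition Ffilt (k l : nat) (S : symbol) : Prop :=
  Rk k S /\ iter l ialpha S = (fun _ _ => 0).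

(* equality of classes in gr_{k,l}: for l >= 1, gr_{k,l} = F_{k,l}/F_{k,l-1};
   gr_{k,0} = {0}, so all elements are equal there. *)
Definition gr_eq (k l : nat) (u v : symbol) : Prop :=
  if l is l'.+1 then Ffilt k l' (fun x xi => u x xi - v x xi) else True.

Definition sscale (a : R) (S : symbol) : symbol := fun x xi => a * S x xi.

End Defs.

(* Write i(alpha) = sum_j a_j(x) d/dxi_j and D = sum_m b_m(x, xi) d/dx_m, with the
   b_m linear in xi.  For a smooth symbol S homogeneous of degree k in xi, Euler's
   identity sum_j xi_j dS/dxi_j = k S holds and d/dxi_i commutes with d/dx_m, so the
   commutator of these first order operators can be computed on the coefficients:
     i(alpha) (D S) = D (i(alpha) S) - xi_t i(alpha) S - (k/2) S,
   i.e. i(alpha) X_k S = X_(k-1) i(alpha) S + r(1,k) S.  Iterating,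
     i(alpha)^(m+1) X_k S = X_(k-m-1) i(alpha)^(m+1) S + (sum_(j<=m) r(1,k-j)) i(alpha)^m S,
   and the sum telescopes to r(m+1,k-m).  Finally, two elements of R^k have the same
   class in gr_(k,l+1) exactly when their images under i(alpha)^l agree, so every
   assertion reduces to this iterated commutation formula. *)

From Pilot Require Import Defs.
From HB Require Import structures.
From mathcomp Require Import all_boot all_order all_algebra.
From mathcomp Require Import all_classical all_reals all_analysis.
From mathcomp Require Import ring.
Import Order.TTheory GRing.Theory Num.Theory.
Import numFieldNormedType.Exports.
Local Open Scope ring_scope.
Local Open Scope classical_set_scope.
Set Implicit Arguments. Unset Strict Implicit. Unset Printing Implicit Defensive.

Section Calculus.
Variable R : realType.

Lemma derive_ext_line (V W U : normedModType R) (f : V -> U) (g : W -> U) a v b w :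
  (forall h : R, f (h *: v + a) = g (h *: w + b)) ->
  derive f a v = derive g b w /\ (derivable f a v <-> derivable g b w).
Proof.
move=> fg.
have fa_gb : f a = g b by move: (fg 0); rewrite !scale0r !add0r.
have E : (fun h : R => h^-1 *: ((f \o shift a) (h *: v) - f a)) =
          (fun h : R => h^-1 *: ((g \o shift b) (h *: w) - g b)).
  by apply/funext => h /=; rewrite /shift /= fg fa_gb.
by rewrite /derive /derivable E.
Qed.

Variable m : nat.
Local Notation pt := 'rV[R]_m.
Local Notation e j := (delta_mx 0 j : pt).

Lemma derive_linear (F : pt -> R) (a v : pt) :
  (forall (h : R) z, F (h *: v + z) = h * F v + F z) ->
  derive F a v = F v /\ derivable F a v.
Proof.
move=> linF.
have cvgF : (fun h : R => h^-1 *: ((F \o shift a) (h *: v) - F a)) @ 0^' --> F v.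
  apply: cvg_near_cst; near=> h.
  have h0 : h != 0 by near: h; exact: nbhs_dnbhs_neq.
  by rewrite /= /shift linF addrK /GRing.scale /= mulrA mulVf ?mul1r.
split; first exact: cvg_lim cvgF.
by apply/cvg_ex; exists (F v).
Unshelve. all: by end_near.
Qed.

Lemma derive_coord (j : 'I_m) (a v : pt) :
  derive (fun x : pt => x ord0 j) a v = v ord0 j /\
  derivable (fun x : pt => x ord0 j) a v.
Proof. by apply: derive_linear => h z; rewrite !mxE. Qed.

Lemma derive_lincomb (f g : pt -> R) (a b : R) (x v : pt) :
  derivable f x v -> derivable g x v ->
  derive (fun y : pt => a * f y + b * g y) x v = a * derive f x v + b * derive g x v /\
  derivable (fun y : pt => a * f y + b * g y) x v.
Proof.
move=> df dg.
have D : is_derive x v (a \*: f + b \*: g) (a *: derive f x v + b *: derive g x v).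
  by apply: is_deriveD; apply: is_deriveZ; exact: derivableP.
by split; [exact: (@derive_val _ _ _ _ _ _ _ D) | exact: (@ex_derive _ _ _ _ _ _ _ D)].
Qed.

Lemma derive_scale (f : pt -> R) a (x v : pt) : derivable f x v ->
  derive (fun y : pt => a * f y) x v = a * derive f x v /\
  derivable (fun y : pt => a * f y) x v.
Proof.
move=> df; have [D1 D2] := derive_lincomb a 0 df df.
have E : (fun y => a * f y + 0 * f y) = (fun y : pt => a * f y).
  by apply/funext => y; rewrite mul0r addr0.
by rewrite E in D1 D2; rewrite D1 mul0r addr0.
Qed.

Lemma derive_mul (f g : pt -> R) (x v : pt) : derivable f x v -> derivable g x v ->
  derive (fun y : pt => f y * g y) x v = f x * derive g x v + g x * derive f x v /\
  derivable (fun y : pt => f y * g y) x v.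
Proof. by move=> df dg; split; [exact: deriveM | exact: derivableM]. Qed.

Lemma derive_coordM (i : 'I_m) (f : pt -> R) (x v : pt) : derivable f x v ->
  derive (fun y : pt => y ord0 i * f y) x v = x ord0 i * derive f x v + v ord0 i * f x /\
  derivable (fun y : pt => y ord0 i * f y) x v.
Proof.
move=> df; have [dc1 dc2] := derive_coord i x v.
by have [-> ?] := derive_mul dc2 df; rewrite dc1 [f x * _]mulrC.
Qed.

Lemma derive_bigsum p (F : 'I_p -> pt -> R) (x v : pt) :
  (forall j, derivable (F j) x v) ->
  derive (fun y : pt => \sum_(j < p) F j y) x v = \sum_(j < p) derive (F j) x v /\
  derivable (fun y : pt => \sum_(j < p) F j y) x v.
Proof.
move=> dF; rewrite -fct_sumE.
by split; [exact: derive_sum | exact: derivable_sum].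
Qed.

Lemma derive_wsum p (a : 'I_p -> R) (F : 'I_p -> pt -> R) (x v : pt) :
  (forall j, derivable (F j) x v) ->
  derive (fun y : pt => \sum_(j < p) a j * F j y) x v = \sum_(j < p) a j * derive (F j) x v /\
  derivable (fun y : pt => \sum_(j < p) a j * F j y) x v.
Proof.
move=> dF.
have daF j : derivable (fun y => a j * F j y) x v by exact: (derive_scale _ (dF j)).2.
have [-> ?] := derive_bigsum daF; split => //.
by apply: eq_bigr => j _; exact: (derive_scale _ (dF j)).1.
Qed.

Lemma iterD_cons (s : seq 'I_m) j (f : pt -> R) :
  Defs.iterD (j :: s) f = fun x => derive (Defs.iterD s f) x (e j).
Proof. by []. Qed.

Lemma iterD_cat (s t : seq 'I_m) (f : pt -> R) :
  Defs.iterD (s ++ t) f = Defs.iterD s (Defs.iterD t f).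
Proof. by rewrite /Defs.iterD foldr_cat. Qed.

Lemma iterD_lincomb (s : seq 'I_m) (f g : pt -> R) a b :
  (forall t, size t < size s -> forall x j, derivable (Defs.iterD t f) x (e j))%N ->
  (forall t, size t < size s -> forall x j, derivable (Defs.iterD t g) x (e j))%N ->
  Defs.iterD s (fun y : pt => a * f y + b * g y) =
  fun y => a * Defs.iterD s f y + b * Defs.iterD s g y.
Proof.
elim: s => [//|j s IH] df dg.
rewrite !iterD_cons IH; last 2 first.
- by move=> t st; apply: df; rewrite /= ltnS ltnW.
- by move=> t st; apply: dg; rewrite /= ltnS ltnW.
apply/funext => x.
by have [-> _] := derive_lincomb a b (df s (ltnSn _) x j) (dg s (ltnSn _) x j).
Qed.

Lemma smooth_lincomb (f g : pt -> R) a b :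
  smooth f -> smooth g -> smooth (fun y : pt => a * f y + b * g y).
Proof.
move=> sf sg s x.
rewrite iterD_lincomb; last 2 first.
- by move=> t _ y j; case: (sf t y) => _; apply.
- by move=> t _ y j; case: (sg t y) => _; apply.
split; last by move=> j; exact: (derive_lincomb a b ((sf s x).2 j) ((sg s x).2 j)).2.
by apply: (cvgD (cvgMl_tmp (sf s x).1) (cvgMl_tmp (sg s x).1)).
Qed.

Lemma smooth_derive j (f : pt -> R) : smooth f -> smooth (fun x : pt => derive f x (e j)).
Proof.
by move=> sf t z; rewrite -[Defs.iterD t _]/(Defs.iterD t (Defs.iterD [:: j] f)) -iterD_cat.
Qed.

Lemma smooth_coordM i (f : pt -> R) :
  smooth f -> smooth (fun y : pt => y ord0 i * f y).
Proof.
move=> sf s; elim: {s}(size s) {-2}s (leqnn (size s)) f sf => [|k IH] s.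
  rewrite leqn0 => /nilP -> f sf x /=; split.
    exact: (cvgM (@coord_continuous R 1 m ord0 i x) (sf [::] x).1).
  by move=> j; exact: (derive_coordM i ((sf [::] x).2 j)).2.
case/lastP: s => [|s j] sk f sf x; first exact: (IH [::]).
rewrite -cats1 iterD_cat.
have -> : Defs.iterD [:: j] (fun y : pt => y ord0 i * f y) =
    fun y => 1 * (y ord0 i * Defs.iterD [:: j] f y) + (e j) ord0 i * f y.
  apply/funext => y; rewrite iterD_cons /=.
  by have [-> _] := derive_coordM i ((sf [::] y).2 j); rewrite mul1r.
have sf' : smooth (Defs.iterD [:: j] f) by move=> t z; rewrite -iterD_cat; apply: sf.
have {}sk : (size s <= k)%N by rewrite size_rcons ltnS in sk.
have IHf := IH _ _ _ sf'.
rewrite iterD_lincomb; last 2 first.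
- by move=> t st y j0; case: (IHf t (leq_trans (ltnW st) sk) y) => _; apply.
- by move=> t _ y j0; case: (sf t y) => _; apply.
split; first exact: (cvgD (cvgMl_tmp (IHf s sk x).1) (cvgMl_tmp (sf s x).1)).
by move=> j0; exact: (derive_lincomb 1 _ ((IHf s sk x).2 j0) ((sf s x).2 j0)).2.
Qed.

Lemma smooth0 : smooth (fun _ : pt => (0 : R)).
Proof.
have iterD0 s : Defs.iterD s (fun _ : pt => (0 : R)) = fun _ => 0.
  elim: s => [//|j s IH]; rewrite iterD_cons IH; apply: funext => x.
  exact: (derive_cst (0 : R)).
move=> s x; rewrite iterD0; split; first exact: (@cst_continuous _ _ (0 : R) x).
by move=> j; exact: (derivable_cst (0 : R)).
Qed.

Lemma smooth_sum p (F : 'I_p -> pt -> R) :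
  (forall i, smooth (F i)) -> smooth (fun y : pt => \sum_(i < p) F i y).
Proof.
elim: p F => [|p IH] F sF.
  by under [fun y => _]funext => y do rewrite big_ord0; exact: smooth0.
have -> : (fun y => \sum_(i < p.+1) F i y) =
   fun y => 1 * \sum_(i < p) F (widen_ord (leqnSn p) i) y + 1 * F ord_max y.
  by apply/funext => y; rewrite big_ord_recr /= !mul1r.
by apply: smooth_lincomb; [apply: IH => i |]; exact: sF.
Qed.

End Calculus.

Lemma sum_delta (R : pzSemiRingType) p (c : 'I_p) (F : 'I_p -> R) :
  \sum_(j < p) (c == j)%:R * F j = F c.
Proof.
rewrite (bigD1 c) //= eqxx mul1r big1 ?addr0 // => j.
by rewrite eq_sym => /negbTE ->; rewrite mul0r.
Qed.

Lemma sum_tupleS (V : nmodType) (T : finType) k (F : k.+1.-tuple T -> V) :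
  \sum_(s : k.+1.-tuple T) F s = \sum_(j : T) \sum_(t : k.-tuple T) F (cons_tuple j t).
Proof.
rewrite pair_big /= (reindex (fun p : T * k.-tuple T => cons_tuple p.1 p.2)) /=.
  by apply: eq_bigr => -[j t].
exists (fun s : k.+1.-tuple T => (thead s, behead_tuple s)) => [[j t] _|s _] /=.
  by rewrite theadE; congr pair; apply: val_inj.
by apply: val_inj => /=; case: s => -[|a s].
Qed.

Section Symbols.
Variable R : realType.
Variable n : nat.
Local Notation N := (n + n + 1)%N.
Local Notation pt := 'rV[R]_N.
Local Notation sym := (symbol R n).
Local Notation e j := (delta_mx 0 j : pt).
Local Notation e2 j := (delta_mx 0 j : 'rV[R]_(N + N)).

Lemma symbol_ext (S T : sym) : (forall x xi, S x xi = T x xi) -> S = T.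
Proof. by move=> ST; apply/funext => x; apply/funext => xi; apply: ST. Qed.

Definition smooth_sym (S : sym) := smooth (joint S).

Lemma submx_shift_lshift (h : R) j (z : 'rV[R]_(N + N)) :
  lsubmx (h *: e2 (lshift N j) + z) = h *: e j + lsubmx z /\
  rsubmx (h *: e2 (lshift N j) + z) = rsubmx z.
Proof.
split; apply/matrixP => a b; rewrite !mxE ?eq_lshift ?eq_rlshift //.
by rewrite andbF mulr0 add0r.
Qed.

Lemma submx_shift_rshift (h : R) j (z : 'rV[R]_(N + N)) :
  lsubmx (h *: e2 (rshift N j) + z) = lsubmx z /\
  rsubmx (h *: e2 (rshift N j) + z) = h *: e j + rsubmx z.
Proof.
split; apply/matrixP => a b; rewrite !mxE ?eq_rshift ?eq_lrshift //.
by rewrite andbF mulr0 add0r.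
Qed.

Lemma joint_derive_lshift j (S : sym) z :
  derive (joint S) z (e2 (lshift N j)) = dx j S (lsubmx z) (rsubmx z) /\
  (derivable (joint S) z (e2 (lshift N j)) <->
   derivable (fun y => S y (rsubmx z)) (lsubmx z) (e j)).
Proof.
apply: derive_ext_line => h; rewrite /joint.
by have [-> ->] := submx_shift_lshift h j z.
Qed.

Lemma joint_derive_rshift j (S : sym) z :
  derive (joint S) z (e2 (rshift N j)) = dxi j S (lsubmx z) (rsubmx z).
Proof.
apply: (derive_ext_line _).1 => h; rewrite /joint.
by have [-> ->] := submx_shift_rshift h j z.
Qed.

Lemma smooth_sym_derivable_x (S : sym) j x xi :
  smooth_sym S -> derivable (fun y => S y xi) x (e j).
Proof.
move=> sS; have [_ [dS _]] := joint_derive_lshift j S (row_mx x xi).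
by move: (dS ((sS [::] (row_mx x xi)).2 (lshift N j))); rewrite row_mxKl row_mxKr.
Qed.

Lemma smooth_sym_dx j (S : sym) : smooth_sym S -> smooth_sym (dx j S).
Proof.
rewrite /smooth_sym.
have -> : joint (dx j S) = fun z => derive (joint S) z (e2 (lshift N j)).
  by apply/funext => z; rewrite (joint_derive_lshift j S z).1.
exact: smooth_derive.
Qed.

Lemma smooth_sym_dxi j (S : sym) : smooth_sym S -> smooth_sym (dxi j S).
Proof.
rewrite /smooth_sym.
have -> : joint (dxi j S) = fun z => derive (joint S) z (e2 (rshift N j)).
  by apply/funext => z; rewrite joint_derive_rshift.
exact: smooth_derive.
Qed.

Lemma smooth_sym_lincomb (S T : sym) a b : smooth_sym S -> smooth_sym T ->
  smooth_sym (fun x xi => a * S x xi + b * T x xi).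
Proof. exact: smooth_lincomb. Qed.

Lemma smooth_sym_sum p (F : 'I_p -> sym) : (forall i, smooth_sym (F i)) ->
  smooth_sym (fun x xi => \sum_(i < p) F i x xi).
Proof. exact: smooth_sum. Qed.

Lemma smooth_sym_coordxM j (S : sym) :
  smooth_sym S -> smooth_sym (fun x xi => crd x j * S x xi).
Proof.
rewrite /smooth_sym.
have -> : joint (fun x xi => crd x j * S x xi) =
          fun z => z ord0 (lshift N j) * joint S z.
  by apply/funext => z; rewrite /joint /crd mxE.
exact: smooth_coordM.
Qed.

Lemma smooth_sym_coordxiM j (S : sym) :
  smooth_sym S -> smooth_sym (fun x xi => crd xi j * S x xi).
Proof.
rewrite /smooth_sym.
have -> : joint (fun x xi => crd xi j * S x xi) =
          fun z => z ord0 (rshift N j) * joint S z.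
  by apply/funext => z; rewrite /joint /crd mxE.
exact: smooth_coordM.
Qed.

Fixpoint homog (k : nat) (S : sym) : Prop :=
  if k is k'.+1 then exists T : 'I_N -> sym, (forall j, homog k' (T j)) /\
     forall x xi, S x xi = \sum_(j < N) crd xi j * T j x xi
  else forall x xi, S x xi = S x 0.

Lemma homog_ext k (S T : sym) : (forall x xi, S x xi = T x xi) -> homog k S -> homog k T.
Proof. by move=> /symbol_ext ->. Qed.

Lemma homog_lincomb k (S T : sym) (a b : pt -> R) : homog k S -> homog k T ->
  homog k (fun x xi => a x * S x xi + b x * T x xi).
Proof.
elim: k S T => [|k IH] S T /=; first by move=> hS hT x xi; rewrite hS hT.
move=> [U [hU EU]] [V [hV EV]].
exists (fun j x xi => a x * U j x xi + b x * V j x xi); split; first by move=> j; apply: IH.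
move=> x xi; rewrite EU EV !mulr_sumr -big_split /=.
by apply: eq_bigr => j _; rewrite mulrDr !mulrA ![_ * crd _ _]mulrC.
Qed.

Lemma homog_scale k (S : sym) (a : pt -> R) : homog k S -> homog k (fun x xi => a x * S x xi).
Proof.
move=> hS; apply: homog_ext (homog_lincomb a (fun _ => 0) hS hS) => x xi.
by rewrite mul0r addr0.
Qed.

Lemma homog0 k : homog k (fun _ _ => 0).
Proof.
elim: k => [//|k IH] /=; exists (fun _ _ _ => 0); split => // x xi.
by rewrite big1 // => j _; rewrite mulr0.
Qed.

Lemma homog_sum k p (F : 'I_p -> sym) : (forall i, homog k (F i)) ->
  homog k (fun x xi => \sum_(i < p) F i x xi).
Proof.
elim: p F => [|p IH] F hF.
  by apply: homog_ext (homog0 k) => x xi; rewrite big_ord0.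
apply: (@homog_ext _ (fun x xi => 1 * \sum_(i < p) F (widen_ord (leqnSn p) i) x xi
                                 + 1 * F ord_max x xi)).
  by move=> x xi; rewrite big_ord_recr /= !mul1r.
by apply: homog_lincomb; [apply: IH => i |].
Qed.

Lemma homog_coordxiM k j (S : sym) : homog k S -> homog k.+1 (fun x xi => crd xi j * S x xi).
Proof.
move=> hS; exists (fun j' x xi => (j == j')%:R * S x xi); split.
  by move=> j'; exact: homog_scale.
by move=> x xi; rewrite (eq_bigr _ (fun j' _ => mulrCA _ _ _)) sum_delta.
Qed.

Lemma homog_derivable_xi k (S : sym) x xi j : homog k S -> derivable (S x) xi (e j).
Proof.
elim: k S x xi => [|k IH] S x xi /=.
  by move=> hS; have -> : S x = cst (S x 0) by apply/funext => y; rewrite hS.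
move=> [T [hT ET]].
have -> : S x = fun y => \sum_(j0 < N) crd y j0 * T j0 x y by apply/funext => y; rewrite ET.
by apply: (derive_bigsum _).2 => j0; exact: (derive_coordM _ (IH _ _ _ (hT j0))).2.
Qed.

Lemma homog0_dxi (S : sym) j x xi : homog 0 S -> dxi j S x xi = 0.
Proof.
move=> hS; rewrite /dxi.
have -> : S x = cst (S x 0) by apply/funext => y; rewrite hS.
exact: derive_cst.
Qed.

Lemma homogS_dxi k (S : sym) (T : 'I_N -> sym) i x xi :
  (forall j, homog k (T j)) -> (forall x xi, S x xi = \sum_(j < N) crd xi j * T j x xi) ->
  dxi i S x xi = T i x xi + \sum_(j < N) crd xi j * dxi i (T j) x xi.
Proof.
move=> hT ET; rewrite /dxi.
have -> : S x = fun y => \sum_(j < N) crd y j * T j x y by apply/funext => y; rewrite ET.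
have dT j := derive_coordM j (homog_derivable_xi (x:=x) (xi:=xi) (j:=i) (hT j)).
rewrite (derive_bigsum (fun j => (dT j).2)).1.
under eq_bigr => j _ do rewrite (dT j).1 mxE eqxx eq_sym.
by rewrite big_split /= addrC sum_delta.
Qed.

Lemma homog_dxi k (S : sym) i : homog k S -> homog k.-1 (dxi i S).
Proof.
elim: k S => [|k IH] S /=; first by move=> hS x xi; rewrite !homog0_dxi.
move=> [T [hT ET]].
apply: (@homog_ext _ (fun x xi => (fun _ => 1) x * T i x xi + (fun _ => 1) x *
    \sum_(j < N) crd xi j * dxi i (T j) x xi)).
  by move=> x xi; rewrite !mul1r (homogS_dxi i x xi hT ET).
apply: homog_lincomb => //.
case: k IH hT {ET} => [|k] IH hT.
  apply: homog_ext (homog0 _) => x xi.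
  by rewrite big1 // => j _; rewrite homog0_dxi ?mulr0.
by exists (fun j => dxi i (T j)); split => // j; exact: IH.
Qed.

Lemma euler_homog k (S : sym) x xi : homog k S ->
  \sum_(j < N) crd xi j * dxi j S x xi = k%:R * S x xi.
Proof.
elim: k S x xi => [|k IH] S x xi /=.
  by move=> hS; rewrite mul0r big1 // => j _; rewrite homog0_dxi ?mulr0.
move=> [T [hT ET]].
under eq_bigr => j _ do rewrite (homogS_dxi j x xi hT ET) mulrDr.
rewrite big_split /= -ET.
have -> : \sum_(j < N) crd xi j * (\sum_(i < N) crd xi i * dxi j (T i) x xi) =
          k%:R * S x xi.
  under eq_bigr => j _ do rewrite mulr_sumr.
  rewrite exchange_big /= ET mulr_sumr; apply: eq_bigr => i _.
  rewrite mulrCA -(IH _ x xi (hT i)) mulr_sumr; apply: eq_bigr => j _.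
  by rewrite mulrCA.
by rewrite -[X in X + _]mul1r -mulrDl addrC -natr1.
Qed.

Lemma homog_polyP k (S : sym) : homog_poly k S <-> homog k S.
Proof.
elim: k S => [|k IH] S /=; split.
- move=> [c Hc] x xi; rewrite !Hc; apply: eq_bigr => t _.
  have -> : (t : seq _) = [::] by apply/nilP; rewrite /nilp size_tuple.
  by rewrite !big_nil.
- move=> hS; exists (fun _ x => S x 0) => x xi.
  under eq_bigr => t _ do
    (have -> : (t : seq _) = [::] by apply/nilP; rewrite /nilp size_tuple).
  by rewrite big_const card_tuple expn0 /= big_nil mulr1 hS addr0.
- move=> [c Hc].
  exists (fun j x xi => \sum_(t : k.-tuple 'I_N) c (cons_tuple j t) x * \prod_(i <- t) crd xi i).
  split; first by move=> j; apply/IH; exists (fun t => c (cons_tuple j t)).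
  move=> x xi; rewrite Hc sum_tupleS; apply: eq_bigr => j _.
  by rewrite mulr_sumr; apply: eq_bigr => t _; rewrite big_cons mulrCA.
- move=> [T [hT ET]].
  have /choice [c Hc] : forall j, exists c : k.-tuple 'I_N -> pt -> R,
      forall x xi, T j x xi = \sum_(t : k.-tuple 'I_N) c t x * \prod_(i <- t) crd xi i.
    by move=> j; apply/IH.
  exists (fun s x => c (thead s) (behead_tuple s) x) => x xi.
  rewrite ET sum_tupleS; apply: eq_bigr => j _.
  rewrite Hc mulr_sumr; apply: eq_bigr => t _.
  rewrite big_cons theadE mulrCA.
  by have -> : behead_tuple (cons_tuple j t) = t by apply: val_inj.
Qed.

Definition smooth_homog k (S : sym) := smooth_sym S /\ homog k S.

Lemma smooth_homog_dxi k (S : sym) i : smooth_homog k S -> smooth_homog k.-1 (dxi i S).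
Proof. by move=> [sS hS]; split; [exact: smooth_sym_dxi | exact: homog_dxi]. Qed.

Lemma homogS_euler k (S : sym) x xi : homog k.+1 S ->
  S x xi = k.+1%:R^-1 * \sum_(j < N) crd xi j * dxi j S x xi.
Proof. by move=> hS; rewrite (euler_homog x xi hS) mulKf. Qed.

Lemma homogS_dxi_scale k (S : sym) (V : 'I_N -> sym) c i x xi :
  (forall j, homog k (V j)) ->
  (forall x xi, S x xi = c * \sum_(j < N) crd xi j * V j x xi) ->
  dxi i S x xi = c * (V i x xi + \sum_(j < N) crd xi j * dxi i (V j) x xi).
Proof.
move=> hV ES.
have ES' y z : S y z = \sum_(j < N) crd z j * (c * V j y z).
  by rewrite ES mulr_sumr; apply: eq_bigr => j _; rewrite mulrCA.
rewrite (homogS_dxi i x xi (fun j => homog_scale (fun=> c) (hV j)) ES') mulrDr mulr_sumr.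
congr (_ + _); apply: eq_bigr => j _; rewrite mulrCA; congr (_ * _).
exact: (derive_scale _ (homog_derivable_xi (hV j))).1.
Qed.

Lemma dx_homogS_euler k (S : sym) m x xi : smooth_homog k.+1 S ->
  dx m S x xi = k.+1%:R^-1 * \sum_(j < N) crd xi j * dx m (dxi j S) x xi.
Proof.
move=> [sS hS]; rewrite /dx.
have dU j : derivable (fun y => dxi j S y xi) x (e m).
  by apply: smooth_sym_derivable_x; exact: smooth_sym_dxi.
have -> : (fun y => S y xi) =
    fun y => k.+1%:R^-1 * \sum_(j < N) crd xi j * dxi j S y xi.
  by apply/funext => y; rewrite (homogS_euler y xi hS).
by rewrite (derive_scale _ (derive_wsum _ dU).2).1 (derive_wsum _ dU).1.
Qed.

Lemma homog_dx k (S : sym) m : smooth_homog k S -> homog k (dx m S).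
Proof.
elim: k S => [|k IH] S.
  move=> [_ hS] x xi /=; rewrite /dx.
  by have -> : (fun y => S y xi) = (fun y => S y 0) by apply/funext => y; rewrite hS.
move=> hS; exists (fun j x xi => k.+1%:R^-1 * dx m (dxi j S) x xi); split.
  by move=> j; apply: homog_scale; apply: IH; exact: (smooth_homog_dxi j hS).
move=> x xi; rewrite (dx_homogS_euler m x xi hS) mulr_sumr; apply: eq_bigr => j _.
by rewrite mulrCA.
Qed.

Lemma smooth_homog_dx k (S : sym) m : smooth_homog k S -> smooth_homog k (dx m S).
Proof. by move=> hS; split; [exact: smooth_sym_dx hS.1 | exact: homog_dx]. Qed.

(* No Schwarz theorem is needed: by Euler's identity the xi-derivatives of a
   homogeneous symbol determine it, so induction on the degree suffices. *)
Lemma dxi_dx_comm k (S : sym) i m x xi : smooth_homog k S ->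
  dxi i (dx m S) x xi = dx m (dxi i S) x xi.
Proof.
elim: k S x xi => [|k IH] S x xi hS.
  rewrite homog0_dxi; last exact: homog_dx.
  rewrite /dx (_ : (fun y => dxi i S y xi) = cst 0) ?derive_cst //.
  by apply/funext => y; rewrite homog0_dxi //; case: hS.
have hU j : smooth_homog k (dxi j S) := smooth_homog_dxi j hS.
have {}IH j : dxi i (dx m (dxi j S)) x xi = dx m (dxi i (dxi j S)) x xi.
  exact: IH (hU j).
have dxidxS : dxi i (dx m S) x xi = k.+1%:R^-1 *
    (dx m (dxi i S) x xi + \sum_(j < N) crd xi j * dx m (dxi i (dxi j S)) x xi).
  under eq_bigr => j _ do rewrite -IH.
  by apply: homogS_dxi_scale (fun j => homog_dx m (hU j)) _ => y z; exact: dx_homogS_euler.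
have dxiS y : dxi i S y xi = k.+1%:R^-1 *
    (1 * dxi i S y xi + 1 * \sum_(j < N) crd xi j * dxi i (dxi j S) y xi).
  rewrite !mul1r; apply: homogS_dxi_scale (fun j => (hU j).2) _ => y' z'.
  exact: homogS_euler hS.2.
have dUi : derivable (fun y => dxi i S y xi) x (e m).
  by apply: smooth_sym_derivable_x; exact: smooth_sym_dxi hS.1.
have dUj j : derivable (fun y => dxi i (dxi j S) y xi) x (e m).
  by apply: smooth_sym_derivable_x; apply: smooth_sym_dxi; case: (hU j).
have [D1 d1] := derive_wsum (fun j => crd xi j) dUj.
have [D2 d2] := derive_lincomb 1 1 dUi d1.
have dxdxiS : dx m (dxi i S) x xi = k.+1%:R^-1 *
    (dx m (dxi i S) x xi + \sum_(j < N) crd xi j * dx m (dxi i (dxi j S)) x xi).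
  rewrite {1}/dx (congr1 (fun f => derive f x (e m)) (funext dxiS)).
  by rewrite (derive_scale _ d2).1 D2 D1 !mul1r.
exact: etrans dxidxS (esym dxdxiS).
Qed.

End Symbols.

Section Operators.
Variable R : realType.
Variable n : nat.
Local Notation N := (n + n + 1)%N.
Local Notation pt := 'rV[R]_N.
Local Notation sym := (symbol R n).
Local Notation e j := (delta_mx 0 j : pt).
Local Notation q := (@qI n).
Local Notation p := (@pI n).
Local Notation t := (tI n).

Lemma eq_qIqI i i' : (q i == q i') = (i == i').
Proof. by rewrite /qI !eq_lshift. Qed.
Lemma eq_pIpI i i' : (p i == p i') = (i == i').
Proof. by rewrite /pI eq_lshift eq_rshift. Qed.
Lemma eq_qIpI i i' : (q i == p i') = false.
Proof. by rewrite /qI /pI eq_lshift eq_lrshift. Qed.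
Lemma eq_pIqI i i' : (p i == q i') = false.
Proof. by rewrite /qI /pI eq_lshift eq_rlshift. Qed.
Lemma eq_qItI i : (q i == t) = false.
Proof. by rewrite /qI /tI eq_lrshift. Qed.
Lemma eq_pItI i : (p i == t) = false.
Proof. by rewrite /pI /tI eq_lrshift. Qed.
Lemma eq_tIqI i : (t == q i) = false.
Proof. by rewrite /qI /tI eq_rlshift. Qed.
Lemma eq_tIpI i : (t == p i) = false.
Proof. by rewrite /pI /tI eq_rlshift. Qed.

Definition coord_eqE :=
  (eq_qIqI, eq_pIpI, eq_qIpI, eq_pIqI, eq_qItI, eq_pItI, eq_tIqI, eq_tIpI, eqxx).

Lemma sum_coord (F : 'I_N -> R) :
  \sum_(j < N) F j = \sum_(i < n) F (q i) + \sum_(i < n) F (p i) + F t.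
Proof. by rewrite big_split_ord /= big_split_ord /= big_ord1. Qed.

Definition coord_case (T : Type) (fq fp : 'I_n -> T) (ft : T) (j : 'I_N) : T :=
  match fintype.split j with
  | inl j1 => match fintype.split j1 with inl i => fq i | inr i => fp i end
  | inr _ => ft
  end.

Lemma coord_caseq T fq fp (ft : T) i : coord_case fq fp ft (q i) = fq i.
Proof.
rewrite /coord_case /qI.
have -> : fintype.split (lshift 1 (lshift n i)) = inl (lshift n i) := unsplitK (inl _).
by have -> : fintype.split (lshift n i) = inl i := unsplitK (inl _).
Qed.

Lemma coord_casep T fq fp (ft : T) i : coord_case fq fp ft (p i) = fp i.
Proof.
rewrite /coord_case /pI.
have -> : fintype.split (lshift 1 (rshift n i)) = inl (rshift n i) := unsplitK (inl _).
by have -> : fintype.split (rshift n i) = inr i := unsplitK (inr _).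
Qed.

Lemma coord_caset T fq fp (ft : T) : coord_case fq fp ft t = ft.
Proof.
rewrite /coord_case /tI.
by have -> : fintype.split (rshift (n + n) (ord0 : 'I_1)) = inr ord0 := unsplitK (inr _).
Qed.

Definition coord_caseE := (coord_caseq, coord_casep, coord_caset).

Lemma coord_ind (P : 'I_N -> Prop) :
  (forall i, P (q i)) -> (forall i, P (p i)) -> P t -> forall j, P j.
Proof.
move=> Pq Pp Pt j; rewrite -(splitK j); case: (fintype.split j) => [j1|k] /=.
  by rewrite -(splitK j1); case: (fintype.split j1) => i /=; [exact: Pq | exact: Pp].
by rewrite (ord1 k); exact: Pt.
Qed.

Definition Xw (w : R) (S : sym) : sym := fun x xi => Dop S x xi + w * crd xi t * S x xi.

Lemma smooth_homog_ext k (S T : sym) :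
  (forall x xi, S x xi = T x xi) -> smooth_homog k S -> smooth_homog k T.
Proof. by move=> /symbol_ext ->. Qed.

Lemma smooth_homog_lincomb k (S T : sym) a b : smooth_homog k S -> smooth_homog k T ->
  smooth_homog k (fun x xi => a * S x xi + b * T x xi).
Proof.
move=> [sS hS] [sT hT]; split; first exact: smooth_sym_lincomb.
exact: (homog_lincomb (fun _ => a) (fun _ => b) hS hT).
Qed.

Lemma smooth_homog_sum k m (F : 'I_m -> sym) : (forall i, smooth_homog k (F i)) ->
  smooth_homog k (fun x xi => \sum_(i < m) F i x xi).
Proof.
move=> hF; split; first by apply: smooth_sym_sum => i; case: (hF i).
by apply: homog_sum => i; case: (hF i).
Qed.

Lemma smooth_homog_coordxM k j (S : sym) :
  smooth_homog k S -> smooth_homog k (fun x xi => crd x j * S x xi).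
Proof.
by move=> [sS hS]; split; [exact: smooth_sym_coordxM | exact: homog_scale].
Qed.

Lemma smooth_homog_coordxiM k j (S : sym) :
  smooth_homog k S -> smooth_homog k.+1 (fun x xi => crd xi j * S x xi).
Proof.
by move=> [sS hS]; split; [exact: smooth_sym_coordxiM | exact: homog_coordxiM].
Qed.

Lemma smooth_homog_ialpha k (S : sym) : smooth_homog k S -> smooth_homog k.-1 (ialpha S).
Proof.
move=> hS.
have hA := smooth_homog_sum (fun i => smooth_homog_lincomb 1 (-1)
  (smooth_homog_coordxM (p i) (smooth_homog_dxi (q i) hS))
  (smooth_homog_coordxM (q i) (smooth_homog_dxi (p i) hS))).
apply: smooth_homog_ext (smooth_homog_lincomb (2^-1) (- 2^-1) hA (smooth_homog_dxi t hS)).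
move=> x xi; rewrite /ialpha [in RHS](eq_bigr (fun i => 1 * (crd x (p i) * dxi (q i) S x xi)
  + -1 * (crd x (q i) * dxi (p i) S x xi))); last by move=> i _; ring.
ring.
Qed.

Lemma smooth_homog_Dop k (S : sym) : smooth_homog k S -> smooth_homog k.+1 (Dop S).
Proof.
move=> hS.
have hA := smooth_homog_sum (fun i => smooth_homog_lincomb 1 (-1)
  (smooth_homog_coordxiM (q i) (smooth_homog_dx (p i) hS))
  (smooth_homog_coordxiM (p i) (smooth_homog_dx (q i) hS))).
have hE : smooth_homog k (Es S).
  apply: smooth_homog_ext (smooth_homog_sum (fun i => smooth_homog_lincomb 1 1
    (smooth_homog_coordxM (p i) (smooth_homog_dx (p i) hS))
    (smooth_homog_coordxM (q i) (smooth_homog_dx (q i) hS)))).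
  by move=> x xi; rewrite /Es; apply: eq_bigr => i _; ring.
have hC := smooth_homog_sum (fun i => smooth_homog_lincomb 1 1
  (smooth_homog_coordxM (p i) (smooth_homog_coordxiM (p i) (smooth_homog_dx t hS)))
  (smooth_homog_coordxM (q i) (smooth_homog_coordxiM (q i) (smooth_homog_dx t hS)))).
apply: smooth_homog_ext
  (smooth_homog_lincomb 1 (-1) (smooth_homog_lincomb 1 1 hA (smooth_homog_coordxiM t hE)) hC).
move=> x xi; rewrite /Dop /Esxi [in RHS]mulr_suml.
rewrite [in RHS](eq_bigr (fun i => 1 * (crd xi (q i) * dx (p i) S x xi)
  + -1 * (crd xi (p i) * dx (q i) S x xi))); last by move=> i _; ring.
rewrite [X in _ = _ - X](eq_bigr (fun i => 1 * (crd x (p i) * (crd xi (p i) * dx t S x xi))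
  + 1 * (crd x (q i) * (crd xi (q i) * dx t S x xi)))); last by move=> i _; ring.
ring.
Qed.

Lemma smooth_homog_Xw k (S : sym) w : smooth_homog k S -> smooth_homog k.+1 (Xw w S).
Proof.
move=> hS; apply: smooth_homog_ext
  (smooth_homog_lincomb 1 w (smooth_homog_Dop hS) (smooth_homog_coordxiM t hS)).
by move=> x xi; rewrite /Xw mulrA !mul1r.
Qed.

Definition dxi_op (a : 'I_N -> pt -> R) (S : sym) : sym :=
  fun x xi => \sum_(j < N) a j x * dxi j S x xi.

Definition dx_op (b : 'I_N -> sym) (S : sym) : sym :=
  fun x xi => \sum_(m < N) b m x xi * dx m S x xi.

Section FirstOrderCommutator.
Variables (a : 'I_N -> pt -> R) (b : 'I_N -> sym).
Hypothesis a_derivable : forall j m y, derivable (a j) y (e m).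
Hypothesis b_derivable : forall m y z j, derivable (b m y) z (e j).

Lemma dxi_dx_op k (S : sym) j x xi : smooth_homog k S ->
  dxi j (dx_op b S) x xi =
  \sum_(m < N) (b m x xi * dxi j (dx m S) x xi + dx m S x xi * dxi j (b m) x xi).
Proof.
move=> hS; have dF m := derive_mul (@b_derivable m x xi j)
  (homog_derivable_xi (x:=x) (xi:=xi) (j:=j) (homog_dx m hS)).
rewrite /dxi /dx_op (derive_bigsum (fun m => (dF m).2)).1.
by apply: eq_bigr => m _; exact: (dF m).1.
Qed.

Lemma dx_dxi_op k (S : sym) m x xi : smooth_homog k S ->
  dx m (dxi_op a S) x xi =
  \sum_(j < N) (a j x * dx m (dxi j S) x xi + dxi j S x xi * derive (a j) x (e m)).
Proof.
move=> hS.
have dF j := derive_mul (@a_derivable j m x)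
  (smooth_sym_derivable_x (j:=m) (x:=x) (xi:=xi) (smooth_sym_dxi j hS.1)).
rewrite /dx /dxi_op (derive_bigsum (fun j => (dF j).2)).1.
by apply: eq_bigr => j _; exact: (dF j).1.
Qed.

Lemma dxi_op_dx_op k (S : sym) x xi : smooth_homog k S ->
  dxi_op a (dx_op b S) x xi = dx_op b (dxi_op a S) x xi
   + \sum_(m < N) (\sum_(j < N) a j x * dxi j (b m) x xi) * dx m S x xi
   - \sum_(j < N) (\sum_(m < N) b m x xi * derive (a j) x (e m)) * dxi j S x xi.
Proof.
move=> hS.
have -> : dxi_op a (dx_op b S) x xi = \sum_(j < N) \sum_(m < N)
    a j x * (b m x xi * dxi j (dx m S) x xi + dx m S x xi * dxi j (b m) x xi).
  by apply: eq_bigr => j _; rewrite (dxi_dx_op j x xi hS) mulr_sumr.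
have -> : dx_op b (dxi_op a S) x xi = \sum_(j < N) \sum_(m < N)
    b m x xi * (a j x * dx m (dxi j S) x xi + dxi j S x xi * derive (a j) x (e m)).
  rewrite exchange_big /=; apply: eq_bigr => m _.
  by rewrite (dx_dxi_op m x xi hS) mulr_sumr.
have -> : \sum_(m < N) (\sum_(j < N) a j x * dxi j (b m) x xi) * dx m S x xi =
    \sum_(j < N) \sum_(m < N) a j x * dxi j (b m) x xi * dx m S x xi.
  by rewrite exchange_big /=; apply: eq_bigr => m _; rewrite mulr_suml.
under [X in _ = _ - X]eq_bigr => j _ do rewrite mulr_suml.
rewrite -big_split -sumrB /=; apply: eq_bigr => j _.
rewrite -big_split -sumrB /=; apply: eq_bigr => m _.
rewrite (dxi_dx_comm j m x xi hS).
set A := a j x; set B := b m x xi; set M := dx m (dxi j S) x xi.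
set D := dx m S x xi; set Db := dxi j (b m) x xi; set E := dxi j S x xi.
set Da := derive (a j) x (e m).
ring.
Qed.

End FirstOrderCommutator.

Definition ialpha_coef : 'I_N -> pt -> R :=
  coord_case (fun i y => 2^-1 * crd y (p i)) (fun i y => - 2^-1 * crd y (q i)) (fun _ => - 2^-1).

Definition Dop_coef : 'I_N -> sym :=
  coord_case (fun i x xi => - crd xi (p i) + crd xi t * crd x (q i))
             (fun i x xi => crd xi (q i) + crd xi t * crd x (p i))
             (fun x xi => - Esxi x xi).

Lemma ialphaE (S : sym) x xi : ialpha S x xi = dxi_op ialpha_coef S x xi.
Proof.
rewrite /dxi_op sum_coord /ialpha_coef !coord_caseE.
under eq_bigr => i _ do rewrite coord_caseq.
under [X in _ = _ + X + _]eq_bigr => i _ do rewrite coord_casep.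
rewrite /ialpha -big_split /= mulrBr mulr_sumr mulNr; congr (_ - _).
by apply: eq_bigr => i _; ring.
Qed.

Lemma DopE (S : sym) x xi : Dop S x xi = dx_op Dop_coef S x xi.
Proof.
rewrite /dx_op sum_coord /Dop_coef !coord_caseE.
under eq_bigr => i _ do rewrite coord_caseq.
under [X in _ = _ + X + _]eq_bigr => i _ do rewrite coord_casep.
rewrite /Dop /Es mulNr -big_split /= mulr_sumr -big_split /=; congr (_ + _).
apply: eq_bigr => i _.
set a1 := crd xi (q i); set a2 := crd xi (p i); set a3 := crd xi t.
set a4 := crd x (q i); set a5 := crd x (p i).
set d1 := dx (p i) S x xi; set d2 := dx (q i) S x xi.
ring.
Qed.

Lemma crd_lincomb (h : R) (v z : pt) j : crd (h *: v + z) j = h * crd v j + crd z j.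
Proof. by rewrite /crd !mxE. Qed.

Lemma crd_delta j m : crd (e j) m = (m == j)%:R.
Proof. by rewrite /crd mxE. Qed.

Lemma ialpha_coef_derive j (y : pt) m : derivable (ialpha_coef j) y (e m) /\
  derive (ialpha_coef j) y (e m) =
    coord_case (fun i => 2^-1 * (p i == m)%:R) (fun i => - 2^-1 * (q i == m)%:R) 0 j.
Proof.
move: j; apply: coord_ind => [i|i|]; rewrite /ialpha_coef !coord_caseE.
- have [d1 d2] := derive_coord (p i) y (e m).
  by have [D ?] := derive_scale (2^-1) d2; split => //; rewrite D d1 mxE.
- have [d1 d2] := derive_coord (q i) y (e m).
  by have [D ?] := derive_scale (- 2^-1) d2; split => //; rewrite D d1 mxE.
- by split; [exact: derivable_cst | exact: derive_cst].
Qed.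

Lemma Esxi_lincomb x (h : R) (v z : pt) : Esxi x (h *: v + z) = h * Esxi x v + Esxi x z.
Proof.
rewrite /Esxi mulr_sumr -big_split /=; apply: eq_bigr => i _.
by rewrite !crd_lincomb; ring.
Qed.

Lemma Dop_coef_derive m (y z : pt) j :
  derivable (Dop_coef m y) z (e j) /\ derive (Dop_coef m y) z (e j) = Dop_coef m y (e j).
Proof.
suff lin h v w : Dop_coef m y (h *: v + w) = h * Dop_coef m y v + Dop_coef m y w.
  by have [? ?] := derive_linear z (fun h w => lin h (e j) w).
move: m; apply: coord_ind => [i|i|]; rewrite /Dop_coef !coord_caseE.
- by rewrite !crd_lincomb; ring.
- by rewrite !crd_lincomb; ring.
- by rewrite Esxi_lincomb; ring.
Qed.

Lemma ialpha_coef_dxi_Dop_coef m x xi :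
  \sum_(j < N) ialpha_coef j x * dxi j (Dop_coef m) x xi = 0.
Proof.
under eq_bigr => j _ do rewrite /dxi (Dop_coef_derive m x xi j).2.
move: m; apply: coord_ind => [i'|i'|]; rewrite /Dop_coef !coord_caseE.
- rewrite sum_coord /ialpha_coef coord_caset !crd_delta !coord_eqE /=.
  under eq_bigr => i _ do rewrite coord_caseq !crd_delta !coord_eqE /=.
  rewrite [X in _ + X + _](eq_bigr (fun i => (i' == i)%:R * (2^-1 * crd x (q i))));
    last by move=> i _; rewrite coord_casep !crd_delta !coord_eqE /=; ring.
  by rewrite big1 ?sum_delta => [|i _]; ring.
- rewrite sum_coord /ialpha_coef coord_caset !crd_delta !coord_eqE /=.
  rewrite [X in _ + X + _]big1; last first.
    by move=> i _; rewrite coord_casep !crd_delta !coord_eqE /=; ring.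
  rewrite (eq_bigr (fun i => (i' == i)%:R * (2^-1 * crd x (p i))));
    last by move=> i _; rewrite coord_caseq !crd_delta !coord_eqE /=; ring.
  by rewrite sum_delta; ring.
- rewrite /Esxi; under eq_bigr => j _ do rewrite mulrN mulr_sumr.
  rewrite sumrN exchange_big /= big1 ?oppr0 // => i _.
  rewrite (eq_bigr (fun j => (p i == j)%:R * (crd x (p i) * ialpha_coef j x)
                            + (q i == j)%:R * (crd x (q i) * ialpha_coef j x)));
    last by move=> j _; rewrite !crd_delta; ring.
  by rewrite big_split /= !sum_delta /ialpha_coef coord_casep coord_caseq; ring.
Qed.

Lemma Dop_coef_derive_ialpha_coef (S : sym) x xi :
  \sum_(j < N) (\sum_(m < N) Dop_coef m x xi * derive (ialpha_coef j) x (e m)) * dxi j S x xi =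
  crd xi t * ialpha S x xi + 2^-1 * \sum_(j < N) crd xi j * dxi j S x xi.
Proof.
have Dq i : \sum_(m < N) Dop_coef m x xi * derive (ialpha_coef (q i)) x (e m) =
    2^-1 * (crd xi (q i) + crd xi t * crd x (p i)).
  rewrite (eq_bigr (fun m => (p i == m)%:R * (2^-1 * Dop_coef m x xi))).
    by rewrite sum_delta /Dop_coef coord_casep.
  by move=> m _; rewrite (ialpha_coef_derive (q i) x m).2 coord_caseq; ring.
have Dp i : \sum_(m < N) Dop_coef m x xi * derive (ialpha_coef (p i)) x (e m) =
    - 2^-1 * (- crd xi (p i) + crd xi t * crd x (q i)).
  rewrite (eq_bigr (fun m => (q i == m)%:R * (- 2^-1 * Dop_coef m x xi))).
    by rewrite sum_delta /Dop_coef coord_caseq.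
  by move=> m _; rewrite (ialpha_coef_derive (p i) x m).2 coord_casep; ring.
have Dt : \sum_(m < N) Dop_coef m x xi * derive (ialpha_coef t) x (e m) = 0.
  by rewrite big1 // => m _; rewrite (ialpha_coef_derive t x m).2 coord_caset mulr0.
rewrite sum_coord Dt mul0r addr0 [in RHS]sum_coord /ialpha.
under eq_bigr => i _ do rewrite Dq.
under [X in _ + X = _]eq_bigr => i _ do rewrite Dp.
set Q1 := \sum_(i < n) crd xi (q i) * dxi (q i) S x xi.
set P1 := \sum_(i < n) crd xi (p i) * dxi (p i) S x xi.
set Q2 := \sum_(i < n) crd x (p i) * dxi (q i) S x xi.
set P2 := \sum_(i < n) crd x (q i) * dxi (p i) S x xi.
have -> : \sum_(i < n) (crd x (p i) * dxi (q i) S x xi - crd x (q i) * dxi (p i) S x xi) =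
    Q2 - P2 by rewrite sumrB.
have -> : \sum_(i < n) 2^-1 * (crd xi (q i) + crd xi t * crd x (p i)) * dxi (q i) S x xi =
    2^-1 * Q1 + 2^-1 * crd xi t * Q2.
  by rewrite /Q1 /Q2 !mulr_sumr -big_split /=; apply: eq_bigr => i _; ring.
have -> : \sum_(i < n) - 2^-1 * (- crd xi (p i) + crd xi t * crd x (q i)) * dxi (p i) S x xi =
    2^-1 * P1 - 2^-1 * crd xi t * P2.
  by rewrite /P1 /P2 !mulr_sumr -sumrB /=; apply: eq_bigr => i _; ring.
ring.
Qed.

Lemma ialpha_Dop k (S : sym) x xi : smooth_homog k S ->
  ialpha (Dop S) x xi = Dop (ialpha S) x xi - crd xi t * ialpha S x xi - 2^-1 * k%:R * S x xi.
Proof.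
move=> hS.
have ad j m y : derivable (ialpha_coef j) y (e m) := (ialpha_coef_derive j y m).1.
have bd m y z j : derivable (Dop_coef m y) z (e j) := (Dop_coef_derive m y z j).1.
rewrite ialphaE (symbol_ext (DopE S)) DopE (symbol_ext (ialphaE S)).
rewrite (dxi_op_dx_op ad bd x xi hS) Dop_coef_derive_ialpha_coef (euler_homog x xi hS.2).
rewrite big1 ?mul0r ?addr0 => [|m _]; last by rewrite ialpha_coef_dxi_Dop_coef mul0r.
rewrite (symbol_ext (ialphaE S)); ring.
Qed.

Lemma ialpha_lincomb k1 k2 (S T : sym) a b x xi : homog k1 S -> homog k2 T ->
  ialpha (fun x xi => a * S x xi + b * T x xi) x xi = a * ialpha S x xi + b * ialpha T x xi.
Proof.
move=> hS hT; rewrite !ialphaE /dxi_op !mulr_sumr -big_split /=.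
apply: eq_bigr => j _; rewrite /dxi.
rewrite (derive_lincomb a b (homog_derivable_xi (x:=x) (xi:=xi) (j:=j) hS)
  (homog_derivable_xi (x:=x) (xi:=xi) (j:=j) hT)).1.
by ring.
Qed.

Lemma ialpha_xi_tM k (S : sym) x xi : homog k S ->
  ialpha (fun x xi => crd xi t * S x xi) x xi = crd xi t * ialpha S x xi - 2^-1 * S x xi.
Proof.
move=> hS; rewrite !ialphaE /dxi_op mulr_sumr.
under eq_bigr => j _ do
  rewrite /dxi (derive_coordM t (homog_derivable_xi (x:=x) (xi:=xi) (j:=j) hS)).1 mxE eqxx andTb.
rewrite (eq_bigr (fun j => crd xi t * (ialpha_coef j x * dxi j S x xi)
  + (t == j)%:R * (ialpha_coef j x * S x xi))); last by move=> j _; rewrite /crd /dxi; ring.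
by rewrite big_split /= sum_delta /ialpha_coef coord_caset; ring.
Qed.

Lemma ialpha_Xw k (S : sym) w x xi : smooth_homog k S ->
  ialpha (Xw w S) x xi = Xw (w - 1) (ialpha S) x xi - 2^-1 * (w + k%:R) * S x xi.
Proof.
move=> hS.
have -> : Xw w S = fun x xi => 1 * Dop S x xi + w * (crd xi t * S x xi).
  by apply: symbol_ext => y z; rewrite /Xw mul1r mulrA.
rewrite (ialpha_lincomb _ _ _ _ (smooth_homog_Dop hS).2 (homog_coordxiM t hS.2)).
by rewrite (ialpha_Dop x xi hS) (ialpha_xi_tM x xi hS.2) /Xw; ring.
Qed.

End Operators.

Section Filtration.
Variable R : realType.
Variable n : nat.
Variable delta : R.
Local Notation N := (n + n + 1)%N.
Local Notation pt := 'rV[R]_N.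
Local Notation sym := (symbol R n).
Local Notation sym0 := (fun _ _ => 0 : R).
Local Notation X k := (Xop delta k).
Local Notation r := (rr n delta).
Local Notation ia := (@ialpha R n).

Lemma ialpha0 : ialpha sym0 = sym0 :> sym.
Proof.
apply: symbol_ext => x xi; rewrite ialphaE /dxi_op big1 // => j _.
by rewrite /dxi (_ : (fun _ => 0) = cst (0 : R)) // derive_cst mulr0.
Qed.

Lemma Xw0 w : Xw w sym0 = sym0 :> sym.
Proof.
apply: symbol_ext => x xi; rewrite /Xw DopE /dx_op mulr0 addr0 big1 // => m _.
by rewrite /dx (_ : (fun _ => 0) = cst (0 : R)) // derive_cst mulr0.
Qed.

Lemma smooth_homog_iter k (S : sym) m :
  smooth_homog k S -> smooth_homog (k - m) (iter m ia S).
Proof.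
move=> hS; elim: m => [|m IH]; first by rewrite subn0.
by rewrite iterS subnS; exact: smooth_homog_ialpha.
Qed.

Lemma iter_ialpha_lincomb k (S T : sym) a b m x xi :
  smooth_homog k S -> smooth_homog k T ->
  iter m ia (fun x xi => a * S x xi + b * T x xi) x xi =
  a * iter m ia S x xi + b * iter m ia T x xi.
Proof.
move=> hS hT; elim: m x xi => [//|m IH] x xi; rewrite !iterS.
rewrite (_ : iter m ia _ = fun x xi => a * iter m ia S x xi + b * iter m ia T x xi).
  exact: ialpha_lincomb (smooth_homog_iter m hS).2 (smooth_homog_iter m hT).2.
by apply: symbol_ext => y z; exact: IH.
Qed.

Lemma iter_ialpha0 m : iter m ia sym0 = sym0 :> sym.
Proof. by elim: m => [//|m IH]; rewrite iterS IH ialpha0. Qed.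

Definition Xweight (k : nat) : R := 2 * (n + 1)%:R * delta + k%:R.

Lemma XopE k (S : sym) : X k S = Xw (Xweight k) S.
Proof. by []. Qed.

Lemma smooth_homog_Xop k j (S : sym) : smooth_homog k S -> smooth_homog k.+1 (X j S).
Proof. exact: smooth_homog_Xw. Qed.

Lemma Xop0 k : X k sym0 = sym0 :> sym.
Proof. exact: Xw0. Qed.

Lemma ialpha_Xop k (S : sym) x xi : smooth_homog k S ->
  ialpha (X k S) x xi = X k.-1 (ialpha S) x xi + r 1 k * S x xi.
Proof.
move=> hS; rewrite !XopE (ialpha_Xw _ x xi hS) /rr.
case: k hS => [|k] hS.
  have d0 j y z : dxi j S y z = 0 by apply: homog0_dxi; case: hS.
  have -> : ialpha S = sym0.
    apply: symbol_ext => y z; rewrite /ialpha d0 big1 ?subr0 ?mulr0 // => i _.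
    by rewrite !d0 !mulr0 subr0.
  by rewrite !Xw0 /= /Xweight; ring.
have -> : Xweight k.+1 - 1 = Xweight k by rewrite /Xweight -addn1 natrD; ring.
by rewrite /Xweight -natr1; ring.
Qed.

Definition ialpha_Xop_coef (k m : nat) : R := \sum_(j < m.+1) r 1 (k - j).

Lemma ialpha_Xop_coefE k m : (m <= k)%N -> ialpha_Xop_coef k m = r m.+1 (k - m).
Proof.
elim: m => [|m IH] mk; first by rewrite /ialpha_Xop_coef big_ord1 subn0.
rewrite /ialpha_Xop_coef big_ord_recr /= -/(ialpha_Xop_coef k m) IH ?(ltnW mk) //.
rewrite -(subnSK mk) /rr; set j := (k - m.+1)%N.
by rewrite -[j.+1%:R]natr1 -[m.+2%:R]natr1 -[m.+1%:R]natr1; ring.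
Qed.

Lemma iter_ialpha_Xop k (S : sym) m x xi : smooth_homog k S ->
  iter m.+1 ia (X k S) x xi =
  X (k - m.+1) (iter m.+1 ia S) x xi + ialpha_Xop_coef k m * iter m ia S x xi.
Proof.
move=> hS; elim: m x xi => [|m IH] x xi.
  by rewrite /= ialpha_Xop // subn1 /ialpha_Xop_coef big_ord1 subn0.
rewrite iterS.
have -> : iter m.+1 ia (X k S) = fun x xi =>
    1 * X (k - m.+1) (iter m.+1 ia S) x xi + ialpha_Xop_coef k m * iter m ia S x xi.
  by apply: symbol_ext => y z; rewrite IH mul1r.
have hT := smooth_homog_iter m.+1 hS.
rewrite (ialpha_lincomb _ _ x xi (smooth_homog_Xop _ hT).2 (smooth_homog_iter m hS).2).
rewrite (ialpha_Xop x xi hT) -!iterS -subnS.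
by rewrite /ialpha_Xop_coef [in RHS]big_ord_recr /=; ring.
Qed.

Lemma smooth_homog_sscale k c (S : sym) : smooth_homog k S -> smooth_homog k (sscale c S).
Proof.
move=> hS; apply: smooth_homog_ext (smooth_homog_lincomb c 0 hS hS) => x xi.
by rewrite mul0r addr0.
Qed.

Lemma sscaleA a b (S : sym) : sscale a (sscale b S) = sscale (a * b) S.
Proof. by apply: symbol_ext => x xi; rewrite /sscale mulrA. Qed.

Lemma sscale1 (S : sym) : sscale 1 S = S.
Proof. by apply: symbol_ext => x xi; rewrite /sscale mul1r. Qed.

Lemma iter_ialpha_sscale k c (S : sym) m :
  smooth_homog k S -> iter m ia (sscale c S) = sscale c (iter m ia S).
Proof.
move=> hS; apply: symbol_ext => x xi.
have -> : sscale c S = fun x xi => c * S x xi + 0 * S x xi.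
  by apply: symbol_ext => y z; rewrite /sscale mul0r addr0.
by rewrite (iter_ialpha_lincomb c 0 m x xi hS hS) mul0r addr0.
Qed.

Lemma FfiltE k l (S : sym) : Ffilt k l S <-> smooth_homog k S /\ iter l ia S = sym0.
Proof.
split=> [[[sS /homog_polyP hS] iS] | [[sS /homog_polyP hS] iS]]; by split.
Qed.

Lemma Ffilt_iter0 k l (S : sym) m : Ffilt k l S -> (l <= m)%N -> iter m ia S = sym0.
Proof. by move=> [_ iS] /subnK <-; rewrite iterD iS iter_ialpha0. Qed.

Lemma gr_eqP k l (S T : sym) : smooth_homog k S -> smooth_homog k T ->
  gr_eq k l.+1 S T <-> iter l ia S = iter l ia T.
Proof.
move=> hS hT; rewrite /gr_eq.
have -> : (fun x xi => S x xi - T x xi) = fun x xi => 1 * S x xi + -1 * T x xi.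
  by apply: symbol_ext => x xi; rewrite mul1r mulN1r.
have iterST x xi : iter l ia (fun x xi => 1 * S x xi + -1 * T x xi) x xi =
    iter l ia S x xi - iter l ia T x xi.
  by rewrite (iter_ialpha_lincomb 1 (-1) l x xi hS hT) mul1r mulN1r.
split=> [/FfiltE [_ iST] | iST].
  apply: symbol_ext => x xi; apply/eqP; rewrite -subr_eq0 -iterST.
  by rewrite iST.
apply/FfiltE; split; first exact: smooth_homog_lincomb.
by apply: symbol_ext => x xi; rewrite iterST iST subrr.
Qed.

Lemma ialpha_Ffilt K L (u : sym) : Ffilt K.+1 L.+1 u -> Ffilt K L (ia u).
Proof.
move=> /FfiltE [hu iu]; apply/FfiltE; split; first exact: smooth_homog_ialpha hu.
by rewrite -iterSr.
Qed.

Lemma ialpha_gr_eq K L (u v : sym) : Ffilt K.+1 L.+1 u -> Ffilt K.+1 L.+1 v ->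
  gr_eq K.+1 L.+1 u v -> gr_eq K L (ia u) (ia v).
Proof.
case: L => [//|L] /FfiltE [hu _] /FfiltE [hv _] /(gr_eqP L.+1 hu hv) uv.
by apply/(gr_eqP L (smooth_homog_ialpha hu) (smooth_homog_ialpha hv)); rewrite -!iterSr.
Qed.

Lemma Xop_Ffilt K L (u : sym) : Ffilt K L u -> Ffilt K.+1 L.+1 (X K u).
Proof.
move=> Fu; have /FfiltE [hu iu] := Fu.
apply/FfiltE; split; first exact: (smooth_homog_Xop K hu).
apply: symbol_ext => x xi.
by rewrite (iter_ialpha_Xop L x xi hu) (Ffilt_iter0 Fu (leqnSn L)) iu Xop0 mulr0 addr0.
Qed.

Lemma Xop_gr_eq K L (u v : sym) : Ffilt K L u -> Ffilt K L v ->
  gr_eq K L u v -> gr_eq K.+1 L.+1 (X K u) (X K v).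
Proof.
move=> /FfiltE [hu iu] /FfiltE [hv iv] uv.
apply/(gr_eqP L (smooth_homog_Xop K hu) (smooth_homog_Xop K hv)).
case: L iu iv uv => [|L] iu iv; first by move: iu iv => /= -> ->.
move=> /(gr_eqP L hu hv) uv; apply: symbol_ext => x xi.
by rewrite (iter_ialpha_Xop L x xi hu) (iter_ialpha_Xop L x xi hv) iu iv uv.
Qed.

Lemma iter_ialpha_Xop_Ffilt K L (u : sym) : (L <= K)%N -> Ffilt K L.+1 u ->
  iter L.+1 ia (X K u) = sscale (r L.+1 (K - L)) (iter L ia u).
Proof.
move=> LK /FfiltE [hu iu]; apply: symbol_ext => x xi.
by rewrite (iter_ialpha_Xop L x xi hu) iu Xop0 ialpha_Xop_coefE // add0r.
Qed.

Lemma Xop_ialpha_gr_eq K L (u : sym) : (L <= K.+1)%N -> Ffilt K.+1 L.+1 u ->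
  gr_eq K.+1 L.+1 (X K (ia u)) (sscale (r L (K.+2 - L.+1)) u).
Proof.
move=> LK Fu; have /FfiltE [hu iu] := Fu.
apply/(gr_eqP L (smooth_homog_Xop K (smooth_homog_ialpha hu)) (smooth_homog_sscale _ hu)).
rewrite (iter_ialpha_sscale _ _ hu); case: L LK Fu iu => [|L] LK Fu iu.
  move: iu => /= ->; apply: symbol_ext => x xi.
  by rewrite Xop0 /sscale /rr /=; ring.
by rewrite (iter_ialpha_Xop_Ffilt (ltnSE LK) (ialpha_Ffilt Fu)) -iterSr !subSS.
Qed.

Lemma ialpha_Xop_gr_eq K L (u : sym) : (L <= K.+1)%N -> Ffilt K L u ->
  gr_eq K L (ia (X K u)) (sscale (r L (K.+2 - L.+1)) u).
Proof.
case: L => [//|L] LK Fu; have /FfiltE [hu _] := Fu.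
apply/(gr_eqP L (smooth_homog_ialpha (smooth_homog_Xop K hu)) (smooth_homog_sscale _ hu)).
by rewrite -iterSr (iter_ialpha_Xop_Ffilt (ltnSE LK) Fu) (iter_ialpha_sscale _ _ hu) !subSS.
Qed.

Lemma Xop_ialpha_inv_gr_eq K L (u : sym) : (L <= K.+1)%N -> r L (K.+2 - L.+1) != 0 ->
  Ffilt K.+1 L.+1 u -> gr_eq K.+1 L.+1 (sscale (r L (K.+2 - L.+1))^-1 (X K (ia u))) u.
Proof.
move=> LK r0 Fu; have /FfiltE [hu _] := Fu.
have hXu := smooth_homog_Xop K (smooth_homog_ialpha hu).
move: (Xop_ialpha_gr_eq LK Fu) => /(gr_eqP L hXu (smooth_homog_sscale _ hu)) E.
apply/(gr_eqP L (smooth_homog_sscale _ hXu) hu).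
by rewrite (iter_ialpha_sscale _ _ hXu) E (iter_ialpha_sscale _ _ hu) sscaleA mulVf // sscale1.
Qed.

Lemma ialpha_Xop_inv_gr_eq K L (u : sym) : (L <= K.+1)%N -> r L (K.+2 - L.+1) != 0 ->
  Ffilt K L u -> gr_eq K L (ia (sscale (r L (K.+2 - L.+1))^-1 (X K u))) u.
Proof.
case: L => [//|L] LK r0 Fu; have /FfiltE [hu _] := Fu.
have hXu := smooth_homog_Xop K hu.
have hiXu := smooth_homog_ialpha hXu.
move: (ialpha_Xop_gr_eq LK Fu) => /(gr_eqP L hiXu (smooth_homog_sscale _ hu)) E.
rewrite [ia _](iter_ialpha_sscale _ 1 hXu).
apply/(gr_eqP L (smooth_homog_sscale _ hiXu) hu).
by rewrite (iter_ialpha_sscale _ _ hiXu) E (iter_ialpha_sscale _ _ hu) sscaleA mulVf // sscale1.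
Qed.

End Filtration.

Local Close Scope classical_set_scope.

Theorem proposition6p2 (R : realType) (n : nat) (delta : R) (k l : nat) :
  (1 <= n)%N -> (1 <= k)%N -> (1 <= l <= k.+1)%N ->
  let r := rr n delta l.-1 (k.+1 - l) in
  (forall u : symbol R n, Ffilt k l u -> Ffilt k.-1 l.-1 (ialpha u)) /\
  (forall u v : symbol R n, Ffilt k l u -> Ffilt k l v -> gr_eq k l u v ->
      gr_eq k.-1 l.-1 (ialpha u) (ialpha v)) /\
  (forall u : symbol R n, Ffilt k.-1 l.-1 u -> Ffilt k l (Xop delta k.-1 u)) /\
  (forall u v : symbol R n, Ffilt k.-1 l.-1 u -> Ffilt k.-1 l.-1 v ->
      gr_eq k.-1 l.-1 u v -> gr_eq k l (Xop delta k.-1 u) (Xop delta k.-1 v)) /\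
  (forall u : symbol R n, Ffilt k l u ->
      gr_eq k l (Xop delta k.-1 (ialpha u)) (sscale r u)) /\
  (forall u : symbol R n, Ffilt k.-1 l.-1 u ->
      gr_eq k.-1 l.-1 (ialpha (Xop delta k.-1 u)) (sscale r u)) /\
  (r != 0 ->
    (forall u : symbol R n, Ffilt k l u ->
       gr_eq k l (sscale r^-1 (Xop delta k.-1 (ialpha u))) u) /\
    (forall u : symbol R n, Ffilt k.-1 l.-1 u ->
       gr_eq k.-1 l.-1 (ialpha (sscale r^-1 (Xop delta k.-1 u))) u)).
Proof.
move=> _ k_gt0 /andP [l_gt0 lk].
case: k k_gt0 lk => [//|K] _; case: l l_gt0 => [//|L] _ LK r; rewrite /r /=.
split; first exact: ialpha_Ffilt.
split; first exact: ialpha_gr_eq.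
split; first exact: Xop_Ffilt.
split; first exact: Xop_gr_eq.
split; first by move=> u; exact: Xop_ialpha_gr_eq.
split; first by move=> u; exact: ialpha_Xop_gr_eq.
by move=> r0; split=> u; [exact: Xop_ialpha_inv_gr_eq | exact: ialpha_Xop_inv_gr_eq].
Qed.
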